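(* If $a,b$ are integers with $a>1$ and $b>1$, then \[\overline{p}(a)\,\overline{p}(b)>\overline{p}(a+b).\]
   Context: An overpartition of a nonnegative integer $n$ is a partition of $n$ in which the first occurrence of each distinct part may be overlined. $\overline{p}(n)$ denotes the number of overpartitions of $n$. *)

From mathcomp Require Import all_boot.
Set Implicit Arguments. Unset Strict Implicit. Unset Printing Implicit Defensive.

Fixpoint seqs_of_size (T : Type) (A : seq T) (m : nat) : seq (seq T) :=
  if m is m'.+1 then [seq x :: s | x <- A, s <- seqs_of_size A m'] else [:: [::]].

(* An overpartition of n, written as the list of its parts in nonincreasing
   order; each part is a pair (k, overlined?).  Conditions: parts are
   positive, they sum to n, they are listed in nonincreasing order, and only
   the first occurrence of a part value may carry the overline. *)
Definition is_overpartition (n : nat) (s : seq (nat * bool)) : bool :=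
  [&& all (fun x => 0 < x.1) s,
      sumn (map fst s) == n,
      sorted geq (map fst s) &
      all (fun i => (nth (0, false) s i).2 ==>
                    (index (nth (0, false) s i).1 (map fst s) == i))
          (iota 0 (size s))].

(* Every overpartition of n has at most n parts, each in [1, n]; the
   candidate list below enumerates each such sequence exactly once. *)
Definition overpartition_candidates (n : nat) : seq (seq (nat * bool)) :=
  flatten [seq seqs_of_size [seq (k, b) | k <- iota 1 n, b <- [:: true; false]] m
          | m <- iota 0 n.+1].

Definition overpartition_count (n : nat) : nat :=
  count (is_overpartition n) (overpartition_candidates n).

From mathcomp Require Import all_boot zify.
Set Implicit Arguments. Unset Strict Implicit. Unset Printing Implicit Defensive.

(* Let pbar m x count the overpartitions of x with parts at most m, and pbar_plain p y
   those with parts at most p in which p itself is not overlined.  Removing the largest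
   part (overlined or not) gives, for x, y > m, the recursions
     pbar (m+1) x       = pbar m x + 2 pbar_plain (m+1) (x - m - 1),
     pbar_plain (m+1) y = pbar m y +   pbar_plain (m+1) (y - m - 1).
   From them, by induction on a + b and then on m, pbar m is submultiplicative, with
     pbar m (a+b) + 2 sum_{t < min(a,m)} pbar m t + [a > 1 and m > 1] <= pbar m a * pbar m b
   for 0 < a <= b and m <= b.  Take m = b and a, b > 1: the sum counts exactly the
   overpartitions of a + b whose largest part exceeds b, so the left-hand side is
   p(a + b) + 1, while the right-hand side is p(a) p(b) (p = overpartition_count). *)

Section InjectivePairs.
Variables (S U R : eqType) (f : S -> U -> R).
Hypothesis f_inj : forall x y x' y', f x y = f x' y' -> x = x' /\ y = y'.

Lemma mem_allpairs_inj (s : seq S) (t : S -> seq U) x y :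
  (f x y \in [seq f x y | x <- s, y <- t x]) = (x \in s) && (y \in t x).
Proof.
apply/allpairsPdep/andP => [[x' [y' [sx' ty' /f_inj [-> ->]]]] | [sx ty]] //.
by exists x, y.
Qed.

Lemma allpairs_uniq_inj (s : seq S) (t : S -> seq U) :
  uniq s -> {in s, forall x, uniq (t x)} -> uniq [seq f x y | x <- s, y <- t x].
Proof.
move=> us ut; apply: allpairs_uniq_dep => // -[x y] [x' y'] _ _ /= /f_inj [ex ey].
by rewrite ex ey.
Qed.
End InjectivePairs.

Lemma pair_inj (A B : Type) (x : A) (y : B) x' y' : (x, y) = (x', y') -> x = x' /\ y = y'.
Proof. by case. Qed.

Lemma cons_inj (A : Type) (x : A) s x' s' : x :: s = x' :: s' -> x = x' /\ s = s'.
Proof. by case. Qed.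

Lemma uniq_flatten_map (T U : eqType) (L : T -> seq U) (s : seq T) :
  uniq s -> (forall x, uniq (L x)) ->
  (forall x x' z, z \in L x -> z \in L x' -> x = x') -> uniq (flatten (map L s)).
Proof.
move=> us uL disj; elim: s us => //= x s IH /andP [xs us].
rewrite cat_uniq uL IH // andbT; apply/hasPn => z /flatten_mapP [x' x's zx'].
by apply/negP => /(disj _ _ _ zx') ex; rewrite -ex x's in xs.
Qed.

Lemma mem_leq_sumn (s : seq nat) x : x \in s -> x <= sumn s.
Proof. by elim: s => //= y s IH; rewrite inE => /orP [/eqP ->|/IH]; lia. Qed.

Lemma size_leq_sumn (s : seq nat) : all (leq 1) s -> size s <= sumn s.
Proof. by elim: s => //= x s IH /andP [x_gt0 /IH]; lia. Qed.

Definition only_first_overlined (s : seq (nat * bool)) : bool :=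
  all (fun i => (nth (0, false) s i).2 ==>
                (index (nth (0, false) s i).1 (map fst s) == i))
      (iota 0 (size s)).

Lemma only_first_overlined_cons x s :
  only_first_overlined (x :: s) =
  all (fun y => y.2 ==> (y.1 != x.1)) s && only_first_overlined s.
Proof.
rewrite /only_first_overlined /= eqxx implybT /= -[1]/(1 + 0) iotaDl all_map.
set fresh := fun y : nat * bool => y.2 ==> (y.1 != x.1).
have -> : all fresh s = all (fresh \o nth (0, false) s) (iota 0 (size s)).
  by rewrite -all_map -/(mkseq _ _) mkseq_nth.
rewrite -all_predI; apply: eq_all => i /=; rewrite /fresh add0n add1n.
by case: (nth _ s i) => v [] //=; rewrite [v == _]eq_sym; case: (x.1 =P v).
Qed.

(* opart_after p s: s lists, nonincreasingly, the parts that follow a part p in an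
   overpartition; a part equal to its predecessor is not a first occurrence, hence plain. *)
Fixpoint opart_after (p : nat) (s : seq (nat * bool)) : bool :=
  if s is x :: t then [&& 0 < x.1, x.1 <= p, x.2 ==> (x.1 < p) & opart_after x.1 t]
  else true.

Lemma opart_afterE p s :
  opart_after p s =
  [&& sorted geq (map fst s), only_first_overlined s &
      all (fun y => [&& 0 < y.1, y.1 <= p & y.2 ==> (y.1 < p)]) s].
Proof.
elim: s p => [|x s IH] p //=.
rewrite IH only_first_overlined_cons (path_sortedE (rev_trans leq_trans)) all_map.
have [xp|_] := leqP x.1 p; last by rewrite !andbF.
have pointwise : all (fun y => [&& 0 < y.1, y.1 <= x.1 & y.2 ==> (y.1 < x.1)]) s =
    [&& all (preim fst (leq^~ x.1)) s, all (fun y => y.2 ==> (y.1 != x.1)) s &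
        all (fun y => [&& 0 < y.1, y.1 <= p & y.2 ==> (y.1 < p)]) s].
  by rewrite -!all_predI; apply: eq_all => -[v []] /=; lia.
rewrite pointwise; apply/idP/idP.
  by case/and5P => -> _ -> -> /and4P [-> -> -> ->].
by case/and3P => /andP [-> ->] /andP [-> ->] /andP [/and3P [-> _ ->] ->].
Qed.

Lemma is_overpartitionE n s :
  is_overpartition n s = opart_after n.+1 s && (sumn (map fst s) == n).
Proof.
rewrite /is_overpartition opart_afterE -/(only_first_overlined s).
have [sum_s|_] := eqVneq (sumn (map fst s)) n; last by rewrite !andbF.
have bounded : all (fun y => [&& 0 < y.1, y.1 <= n.+1 & y.2 ==> (y.1 < n.+1)]) s =
               all (fun y => 0 < y.1) s.
  apply: eq_in_all => y ys; have := mem_leq_sumn (map_f fst ys).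
  by rewrite sum_s; case: y.2 => /=; lia.
by rewrite bounded andbT /= andbC -andbA.
Qed.

Lemma mem_seqs_of_size (T : eqType) (A : seq T) m s :
  (s \in seqs_of_size A m) = (size s == m) && all (mem A) s.
Proof.
elim: m s => [|m IH] [|x t] //=.
  by case: allpairsPdep => // -[? [? [_ _ //]]].
by rewrite (mem_allpairs_inj (@cons_inj _)) IH eqSS andbCA.
Qed.

Lemma uniq_seqs_of_size (T : eqType) (A : seq T) m : uniq A -> uniq (seqs_of_size A m).
Proof.
by move=> uA; elim: m => [|m IH] //; apply: (allpairs_uniq_inj (@cons_inj _)).
Qed.

Lemma uniq_overpartition_candidates n : uniq (overpartition_candidates n).
Proof.
apply: uniq_flatten_map => [|m|m m' s]; first exact: iota_uniq.
  by apply/uniq_seqs_of_size/(allpairs_uniq_inj (@pair_inj _ _)) => //; apply: iota_uniq.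
by rewrite !mem_seqs_of_size => /andP [/eqP <- _] /andP [/eqP <- _].
Qed.

Lemma mem_overpartition_candidates n s :
  is_overpartition n s -> s \in overpartition_candidates n.
Proof.
case/and4P => parts_gt0 /eqP sum_s _ _; apply/flatten_mapP; exists (size s).
  by rewrite mem_iota -(size_map fst) -sum_s ltnS size_leq_sumn // all_map.
rewrite mem_seqs_of_size eqxx; apply/allP => -[v o] vo.
have v_le_n : v <= n by rewrite -sum_s (mem_leq_sumn (map_f fst vo)).
have v_gt0 : 0 < v := allP parts_gt0 _ vo.
apply/allpairsP; exists (v, o); rewrite /= mem_iota.
by split => //; [lia | case: o {vo}].
Qed.

Definition opart_heads (p n : nat) : seq (nat * bool) :=
  [seq (v, o) | v <- iota 1 (minn p n), o <- if v < p then [:: true; false] else [:: false]].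

Lemma mem_opart_heads p n x :
  (x \in opart_heads p n) = [&& 0 < x.1, x.1 <= minn p n & x.2 ==> (x.1 < p)].
Proof.
case: x => v o; rewrite (mem_allpairs_inj (@pair_inj _ _)) mem_iota /=.
by case: (v < p); case: o; rewrite ?inE /=; lia.
Qed.

Lemma uniq_opart_heads p n : uniq (opart_heads p n).
Proof.
apply: (allpairs_uniq_inj (@pair_inj _ _)); first exact: iota_uniq.
by move=> v _; case: (v < p).
Qed.

Fixpoint opart_enum (k p n : nat) : seq (seq (nat * bool)) :=
  nseq (n == 0) [::] ++
  if k is k'.+1 then
    [seq x :: s | x <- opart_heads p n, s <- opart_enum k' x.1 (n - x.1)]
  else [::].

Lemma uniq_opart_enum k p n : uniq (opart_enum k p n).
Proof.
elim: k p n => [|k IH] p n /=; first by rewrite cats0; case: (n == 0).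
rewrite cat_uniq; apply/and3P; split; first by case: (n == 0).
  by apply/hasPn => s /allpairsPdep [x [t [_ _ ->]]]; case: (n == 0).
apply: (allpairs_uniq_inj (@cons_inj _)); first exact: uniq_opart_heads.
by move=> x _; apply: IH.
Qed.

Lemma mem_opart_enum k p n s : n <= k ->
  (s \in opart_enum k p n) = opart_after p s && (sumn (map fst s) == n).
Proof.
elim: k p n s => [|k IH] p n [|x t] n_le_k /=; rewrite mem_cat mem_nseq.
- by rewrite lt0b eqxx andbT orbF eq_sym.
- have -> : n = 0 by lia.
  by case: x => [[|v] o]; rewrite /= ?addSn in_nil ?andbF.
- rewrite lt0b eqxx andbT eq_sym.
  by case: allpairsPdep => [[? [? [_ _ //]]]|_]; rewrite orbF.
rewrite lt0b andbF /= (mem_allpairs_inj (@cons_inj _)) mem_opart_heads.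
case: x => [[|v] o] //=; rewrite IH; last by lia.
by case: (opart_after _ t); rewrite ?andbF //=; case: o => /=; lia.
Qed.

Definition pbar_plain (p n : nat) : nat := size (opart_enum n p n).

Lemma size_opart_enum k p n : n <= k -> size (opart_enum k p n) = pbar_plain p n.
Proof.
move=> n_le_k; apply/perm_size/uniq_perm; try exact: uniq_opart_enum.
by move=> s; rewrite !mem_opart_enum.
Qed.

Lemma pbar_plain_rec p n : pbar_plain p n =
  (n == 0) + \sum_(1 <= v < (minn p n).+1) (if v < p then 2 else 1) * pbar_plain v (n - v).
Proof.
case: n => [|n]; first by rewrite /pbar_plain /= big_geq.
rewrite [LHS]/pbar_plain /= add0n size_allpairs_dep sumnE big_map big_allpairs_dep /=.
rewrite /index_iota subSS subn0; apply: eq_big_seq => v; rewrite mem_iota => v_range.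
rewrite size_opart_enum; last by lia.
by case: (v < p); rewrite !big_cons big_nil /=; lia.
Qed.

Lemma overpartition_count_plain n : overpartition_count n = pbar_plain n.+1 n.
Proof.
rewrite /overpartition_count -size_filter -(size_opart_enum n.+1 (leqnn n)).
apply/perm_size/uniq_perm; first exact/filter_uniq/uniq_overpartition_candidates.
  exact: uniq_opart_enum.
move=> s; rewrite mem_filter mem_opart_enum // -is_overpartitionE.
exact/andb_idr/mem_overpartition_candidates.
Qed.

Definition pbar (m x : nat) : nat :=
  (x == 0) + \sum_(1 <= v < (minn m x).+1) 2 * pbar_plain v (x - v).

Lemma overpartition_countE n : overpartition_count n = pbar n n.
Proof.
rewrite overpartition_count_plain pbar_plain_rec /pbar (minn_idPr (leqnSn n)) minnn.
by congr (_ + _); apply: eq_big_nat => v /andP [_ ->].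
Qed.

Lemma pbarn0 m : pbar m 0 = 1.
Proof. by rewrite /pbar minn0 big_geq. Qed.

Lemma pbar_plainn0 p : pbar_plain p 0 = 1.
Proof. by rewrite pbar_plain_rec minn0 big_geq. Qed.

Lemma pbar0n x : pbar 0 x = (x == 0).
Proof. by rewrite /pbar min0n big_geq // addn0. Qed.

Lemma pbarS m x :
  pbar m.+1 x = pbar m x + (if m < x then 2 * pbar_plain m.+1 (x - m.+1) else 0).
Proof.
rewrite /pbar -addnA; congr (_ + _); case: ifP => m_lt_x.
  by rewrite (minn_idPl m_lt_x) (minn_idPl (ltnW m_lt_x)) big_nat_recr.
by rewrite addn0; congr (\sum_(1 <= v < _.+1) _); lia.
Qed.

Lemma pbar_plainS m y :
  pbar_plain m.+1 y = pbar m y + (if m < y then pbar_plain m.+1 (y - m.+1) else 0).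
Proof.
rewrite pbar_plain_rec /pbar -addnA; congr (_ + _); case: ifP => m_lt_y.
  rewrite (minn_idPl m_lt_y) (minn_idPl (ltnW m_lt_y)) big_nat_recr //= ltnn mul1n.
  by congr (_ + _); apply: eq_big_nat => v /andP [_ ->].
rewrite addn0 (_ : minn m.+1 y = minn m y); last by lia.
by apply: eq_big_nat => v v_range; rewrite ifT //; lia.
Qed.

Lemma pbar_plainS_small m y : y <= m -> pbar_plain m.+1 y = pbar m y.
Proof. by rewrite pbar_plainS leqNgt => /negbTE ->; rewrite addn0. Qed.

Lemma pbarS_small m x : x <= m -> pbar m.+1 x = pbar m x.
Proof. by rewrite pbarS leqNgt => /negbTE ->; rewrite addn0. Qed.

Lemma pbar_stable m m' x : x <= m -> m <= m' -> pbar m' x = pbar m x.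
Proof.
move=> x_le_m /subnK <-; elim: (m' - m) => [|d IH]; first by rewrite add0n.
by rewrite addSn pbarS_small ?IH //; lia.
Qed.

Lemma pbar_leq_plain m y : pbar m y <= pbar_plain m.+1 y.
Proof. by rewrite pbar_plainS leq_addr. Qed.

Lemma pbar_plain_leq m y : pbar_plain m.+1 y <= pbar m.+1 y.
Proof. by rewrite pbar_plainS pbarS; case: ifP; lia. Qed.

Lemma pbar_plain1n y : pbar_plain 1 y = 1.
Proof.
elim/ltn_ind: y => -[|y] IH; first exact: pbar_plainn0.
by rewrite pbar_plainS pbar0n /= subn1 IH.
Qed.

Lemma pbar1n x : pbar 1 x = (if x == 0 then 1 else 2).
Proof. by rewrite pbarS pbar0n pbar_plain1n; case: x. Qed.

Lemma pbar_plain2n y : pbar_plain 2 y = y.+1.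
Proof.
elim/ltn_ind: y => -[|[|y]] IH; first exact: pbar_plainn0.
  by rewrite pbar_plainS pbar1n.
by rewrite pbar_plainS pbar1n /= subSS IH; lia.
Qed.

Lemma pbar2n x : pbar 2 x = (if x == 0 then 1 else 2 * x).
Proof. by case: x => [|[|x]]; rewrite pbarS pbar1n //= subSS pbar_plain2n; lia. Qed.

Lemma pbar_homo m :
  {homo pbar m.+1 : x y / x <= y} /\ {homo pbar_plain m.+1 : x y / x <= y}.
Proof.
elim: m => [|m [homo_pbar homo_plain]].
  split=> x y; rewrite ?pbar1n ?pbar_plain1n //.
  by case: x => [|x]; case: y.
have homo_plainS : {homo pbar_plain m.+2 : x y / x <= y}.
  move=> x y; elim/ltn_ind: y x => y IH x x_le_y.
  rewrite (pbar_plainS _ x) (pbar_plainS _ y); apply: leq_add; first exact: homo_pbar.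
  by case: ifP => [m_lt_x|_] //; rewrite ifT; [apply: IH|]; lia.
split=> // x y x_le_y; rewrite (pbarS _ x) (pbarS _ y); apply: leq_add; first exact: homo_pbar.
by case: ifP => [m_lt_x|_] //; rewrite ifT ?leq_mul2l ?homo_plainS //; lia.
Qed.

Lemma leq_pbar m x y : x <= y -> pbar m.+1 x <= pbar m.+1 y.
Proof. exact: (pbar_homo m).1. Qed.

Lemma leq_pbar_plain m x y : x <= y -> pbar_plain m.+1 x <= pbar_plain m.+1 y.
Proof. exact: (pbar_homo m).2. Qed.

Lemma pbar_gt0 m x : 0 < pbar m.+1 x.
Proof. by rewrite -(pbarn0 m.+1) leq_pbar. Qed.

Lemma pbar_plain_gt0 m x : 0 < pbar_plain m.+1 x.
Proof. by rewrite -(pbar_plainn0 m.+1) leq_pbar_plain. Qed.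

Lemma pbarS_large m x : m < x -> pbar m.+1 x = pbar m x + 2 * pbar_plain m.+1 (x - m.+1).
Proof. by move=> m_lt_x; rewrite pbarS m_lt_x. Qed.

Lemma pbar_plainS_large m y :
  m < y -> pbar_plain m.+1 y = pbar m y + pbar_plain m.+1 (y - m.+1).
Proof. by move=> m_lt_y; rewrite pbar_plainS m_lt_y. Qed.

Lemma sum_pbarS_small m k :
  k <= m.+1 -> \sum_(t < k) pbar m.+1 t = \sum_(t < k) pbar m t.
Proof. by move=> k_le_m; apply: eq_bigr => t _; apply: pbarS_small; have := ltn_ord t; lia. Qed.

Lemma pbar_excess_small m a b : m <= 2 -> 0 < a -> a <= b -> m <= b ->
  pbar m (a + b) + 2 * \sum_(t < minn a m) pbar m t + ((1 < a) && (1 < m))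
    <= pbar m a * pbar m b.
Proof.
case: a b => [|a] [|b] // m_le_2 _ a_le_b m_le_b.
case: m m_le_2 m_le_b => [|[|[|//]]] _ m_le_b; rewrite ?minn0 ?big_ord0 addSn.
- by rewrite !pbar0n andbF.
- by rewrite minnSS minn0 big_ord1 !pbar1n andbF.
rewrite andbT; case: a a_le_b => [|a] a_le_b.
  by rewrite big_ord1 !pbar2n /=; lia.
by rewrite !minnSS minn0 big_ord_recr big_ord1 !pbar2n /=; nia.
Qed.

(* An overpartition of a + b with largest part j in (b, m] leaves one of a + b - j < a
   with parts at most b. *)
Lemma pbar_large_parts m a b : a <= b -> b <= m ->
  pbar m (a + b) + 2 * \sum_(t < a + b - m) pbar b t =
  pbar b (a + b) + 2 * \sum_(t < a) pbar b t.
Proof.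
move=> a_le_b /subnK <-; elim: (m - b) => [|d IH]; first by rewrite add0n addnK.
rewrite addSn pbarS; case: ifP => [large|/negbT small]; last first.
  have [-> e] : a + b - (d + b).+1 = 0 /\ a + b - (d + b) = 0 by lia.
  by rewrite addn0 -IH e.
have e : a + b - (d + b) = (a + b - (d + b).+1).+1 by lia.
rewrite -IH e big_ord_recr /=.
rewrite (@pbar_plainS_small _ (a + b - _)) ?(@pbar_stable b (d + b) (a + b - _)); lia.
Qed.

Section SubmultiplicativeBelow.
Variable n : nat.
Hypothesis pbar_submult_below :
  forall m x y, x + y < n -> pbar m (x + y) <= pbar m x * pbar m y.

Lemma leq_pbar_plain_add m x y : x + y < n ->
  pbar_plain m.+2 (x + y) <= 2 * pbar_plain m.+2 x * pbar_plain m.+2 y.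
Proof.
have [k] := ubnP (x + y); elim: k x y => // k IH x y xy_lt_k xy_lt_n.
wlog y_le_x : x y xy_lt_k xy_lt_n / y <= x.
  move=> W; have [|x_lt_y] := leqP y x; first exact: W.
  rewrite addnC mulnAC; apply: W => //; lia.
have submult_xy := pbar_submult_below m.+1 xy_lt_n.
have [m_lt_x | x_le_m] := ltnP m.+1 x.
  rewrite pbar_plainS_large; last by lia.
  rewrite (pbar_plainS_large m_lt_x) -addnBAC //.
  have IH_rest := IH (x - m.+2) y ltac:(lia) ltac:(lia).
  have := leq_mul (leqnn (pbar m.+1 x)) (pbar_leq_plain m.+1 y).
  nia.
have split_xy : pbar_plain m.+2 (x + y) <= pbar m.+1 (x + y) + pbar_plain m.+2 x.
  by rewrite pbar_plainS leq_add2l; case: ifP => // _; apply: leq_pbar_plain; lia.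
have y_le_m := leq_trans y_le_x x_le_m.
rewrite (pbar_plainS_small x_le_m) in split_xy *; rewrite (pbar_plainS_small y_le_m).
have := pbar_gt0 m y; nia.
Qed.

Lemma leq_pbar_plain_addl m x y : x <= m -> x + y < n ->
  pbar_plain m.+1 (x + y) <= pbar m x * pbar_plain m.+1 y.
Proof.
move=> x_le_m; elim/ltn_ind: y => y IH xy_lt_n.
have submult_xy := pbar_submult_below m xy_lt_n.
have [m_lt_y | y_le_m] := ltnP m y.
  rewrite (pbar_plainS_large m_lt_y) pbar_plainS_large -?addnBA //; last by lia.
  have := IH (y - m.+1) ltac:(lia) ltac:(lia); nia.
have := pbar_submult_below m.+1 xy_lt_n.
rewrite (pbarS_small x_le_m) (pbarS_small y_le_m) (pbar_plainS_small y_le_m).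
by have := pbar_plain_leq m (x + y); lia.
Qed.

Lemma pbar_excess_step m a b : a + b = n -> 0 < a -> a <= b -> m.+2 < b ->
  pbar m.+2 (a + b) + 2 * \sum_(t < minn a m.+2) pbar m.+2 t + (1 < a)
    <= pbar m.+2 a * pbar m.+2 b ->
  pbar m.+3 (a + b) + 2 * \sum_(t < minn a m.+3) pbar m.+3 t + (1 < a)
    <= pbar m.+3 a * pbar m.+3 b.
Proof.
move=> ab_n a_gt0 a_le_b b_large IH.
rewrite (pbarS_large b_large) pbarS_large; last by lia.
have [a_small | a_large] := leqP a m.+2.
  rewrite (pbarS_small a_small) (minn_idPl (leqW a_small)) (sum_pbarS_small (leqW a_small)).
  rewrite (minn_idPl a_small) in IH.
  have := @leq_pbar_plain_addl m.+2 a (b - m.+3) a_small ltac:(lia).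
  rewrite addnBA //; nia.
rewrite (pbarS_large a_large) (minn_idPr a_large) big_ord_recr /= sum_pbarS_small //.
rewrite (@pbarS_small m.+2 m.+2) // (minn_idPr (ltnW a_large)) in IH *.
have -> : a + b - m.+3 = (a - m.+3) + b by lia.
rewrite pbar_plainS_large; last by lia.
have -> : a - m.+3 + b - m.+3 = (a - m.+3) + (b - m.+3) by lia.
have submult_ab := @pbar_submult_below m.+2 (a - m.+3) b ltac:(lia).
have plain_ab := @leq_pbar_plain_add m.+1 (a - m.+3) (b - m.+3) ltac:(lia).
have := pbar_leq_plain m.+2 (a - m.+3).
have := @leq_pbar m.+1 _ _ (ltnW a_large).
have := pbar_plain_gt0 m.+2 (b - m.+3).
nia.
Qed.

Lemma pbar_excess m a b : a + b = n -> 0 < a -> a <= b -> m <= b ->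
  pbar m (a + b) + 2 * \sum_(t < minn a m) pbar m t + ((1 < a) && (1 < m))
    <= pbar m a * pbar m b.
Proof.
move=> ab_n a_gt0 a_le_b; elim: m => [|m IH] m_le_b; first exact: pbar_excess_small.
case: m IH m_le_b => [|[|m]] IH m_le_b; try exact: pbar_excess_small.
have := IH (ltnW m_le_b); rewrite !andbT; exact: pbar_excess_step.
Qed.

Lemma pbar_submult_at m a b : a + b = n -> a <= b -> pbar m (a + b) <= pbar m a * pbar m b.
Proof.
move=> ab_n a_le_b; have [->|a_gt0] := posnP a; first by rewrite pbarn0 mul1n.
have excess m' := @pbar_excess m' a b ab_n a_gt0 a_le_b.
have [m_le_b | b_lt_m] := leqP m b; first by have := excess m m_le_b; lia.
have := pbar_large_parts a_le_b (ltnW b_lt_m); have := excess b (leqnn b).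
rewrite (minn_idPl a_le_b) (pbar_stable a_le_b (ltnW b_lt_m)).
by rewrite (pbar_stable (leqnn b) (ltnW b_lt_m)); lia.
Qed.
End SubmultiplicativeBelow.

Lemma pbar_submult m x y : pbar m (x + y) <= pbar m x * pbar m y.
Proof.
have [n] := ubnP (x + y); elim: n m x y => // n IH m x y xy_lt_n.
wlog x_le_y : x y xy_lt_n / x <= y.
  move=> W; have [|y_lt_x] := leqP x y; first exact: W.
  by rewrite addnC mulnC; apply: W; lia.
by apply: (@pbar_submult_at (x + y)) => // m' x' y' ?; apply: IH; lia.
Qed.

Theorem theorem1p1 (a b : nat) (ha : 1 < a) (hb : 1 < b) :
  overpartition_count (a + b) < overpartition_count a * overpartition_count b.
Proof.
wlog a_le_b : a b ha hb / a <= b.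
  move=> W; have [|b_lt_a] := leqP a b; first exact: W.
  by rewrite addnC mulnC; apply: W => //; exact: ltnW.
have := pbar_large_parts a_le_b (leq_addl a b).
have := pbar_excess (fun m x y _ => pbar_submult m x y) (erefl (a + b)) (ltnW ha) a_le_b (leqnn b).
rewrite !overpartition_countE subnn big_ord0 (minn_idPl a_le_b) ha hb.
rewrite -(pbar_stable (leqnn a) a_le_b); lia.
Qed.
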